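(* The infimum of $\operatorname{Rib}(\mathcal{U}_{w,F})$ over all folded ribbon $3$-stick unknots $\mathcal{U}_{w,F}$ (any non-degenerate triangle diagram $\mathcal{U}$, any width $w$, any folding information $F$) with ribbon linking number $\operatorname{Lk}(\mathcal{U}_{w,F})=\pm1$ equals $\sqrt{3}$, and this value is attained when $\mathcal{U}$ is an equilateral triangle.
   Context: A folded ribbon $3$-stick unknot corresponds to an unknot diagram $\mathcal{U}$ with three edges, here a non-degenerate triangle (non-collinear vertices). For width $w>0$, the corresponding folded ribbon $\mathcal{U}_{w,F}$ is a flat strip of width $w$ centred on $\mathcal{U}$ (boundary parallel to and at distance $w/2$ from each edge), folded at each vertex along a fold line through the vertex perpendicular to the bisector of the angle there; it is a piecewise-linear immersion of a Möbius band into the plane whose only singularities are the pairwise disjoint fold lines; the folding information $F$ records at each fold which of the two layers of ribbon lies on top. Folded ribbonlength: $\operatorname{Rib}(\mathcal{U}_{w,F})=\operatorname{Len}(\mathcal{U})/w$. The ribbon linking number $\operatorname{Lk}(\mathcal{U}_{w,F})$ (for an orientation of $\mathcal{U}$) is the linking number of the diagram with the boundary of the ribbon, i.e. one half the sum of the signs (right-hand rule) of the crossings between the diagram and the boundary curve. For such ribbons $\operatorname{Lk}\in\{\pm1,\pm3\}$. *)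

From HB Require Import structures.
From mathcomp Require Import all_boot all_order all_algebra.
Set Implicit Arguments. Unset Strict Implicit. Unset Printing Implicit Defensive.
Import Order.TTheory GRing.Theory Num.Theory.
Local Open Scope ring_scope.

Section Ribbon.
Variable R : rcfType.

Definition pt := (R * R)%type.
Definition vsub (x y : pt) : pt := (x.1 - y.1, x.2 - y.2).
Definition vadd (x y : pt) : pt := (x.1 + y.1, x.2 + y.2).
Definition vscale (c : R) (x : pt) : pt := (c * x.1, c * x.2).
Definition dot (u v : pt) : R := u.1 * v.1 + u.2 * v.2.
Definition cross (u v : pt) : R := u.1 * v.2 - u.2 * v.1.
Definition vnorm (u : pt) : R := Num.sqrt (dot u u).

(* A 3-stick unknot diagram: a triangle with vertices P 0, P 1, P 2,
   oriented P 0 -> P 1 -> P 2 -> P 0.  Edge i goes from P i to P (i+1). *)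
Definition nxt (i : 'I_3) : 'I_3 := ordS i.
Definition prv (i : 'I_3) : 'I_3 := ord_pred i.

Definition nondegenerate_triangle (P : 'I_3 -> pt) : Prop :=
  cross (vsub (P (nxt 0)) (P 0)) (vsub (P (prv 0)) (P 0)) != 0.

Definition equilateral_triangle (P : 'I_3 -> pt) : Prop :=
  forall i j : 'I_3, vnorm (vsub (P (nxt i)) (P i)) = vnorm (vsub (P (nxt j)) (P j)).

Definition len (P : 'I_3 -> pt) : R := \sum_(i < 3) vnorm (vsub (P (nxt i)) (P i)).

Definition rib (P : 'I_3 -> pt) (w : R) : R := len P / w.

Definition bisector (P : 'I_3 -> pt) (i : 'I_3) : pt :=
  let a := vsub (P (prv i)) (P i) in
  let b := vsub (P (nxt i)) (P i) in
  vadd (vscale (vnorm a)^-1 a) (vscale (vnorm b)^-1 b).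

Definition dist_line (v b x : pt) : R :=
  `|cross (vsub b v) (vsub x v)| / vnorm (vsub b v).

(* The fold line at vertex i, i.e. the part of the line through P i
   perpendicular to the bisector that lies in the (open) ribbon of width w,
   i.e. at distance < w/2 from the edge lines (a point of the line
   perpendicular to the bisector is equidistant from both edge lines). *)
Definition fold_line (P : 'I_3 -> pt) (w : R) (i : 'I_3) : pt -> Prop :=
  fun x => dot (vsub x (P i)) (bisector P i) = 0 /\
           dist_line (P i) (P (nxt i)) x < w / 2.

(* The folded ribbon U_{w,F} is well defined: the fold lines are pairwise
   disjoint. *)
Definition fold_lines_disjoint (P : 'I_3 -> pt) (w : R) : Prop :=
  forall (i j : 'I_3) (x : pt), i != j -> fold_line P w i x -> fold_line P w j x -> False.

Definition folded_ribbon_3stick (P : 'I_3 -> pt) (w : R) : Prop :=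
  [/\ nondegenerate_triangle P, 0 < w & fold_lines_disjoint P w].

(* Folding information: F i = true iff at the fold at vertex i the layer of
   the outgoing edge (edge i, from P i to P (i+1)) lies on top of the layer
   of the incoming edge (edge i-1). *)
Definition folding_info := 'I_3 -> bool.

(* Sign of a crossing, right-hand rule, given the directions of the over-
   and under-strands. *)
Definition crossing_sign (over under : pt) : R := Num.sg (cross over under).

(* The crossings between the diagram and the ribbon
   boundary occur at the folds, two at each fold: the boundary of the
   outgoing layer crosses the incoming edge, and the boundary of the incoming
   layer crosses the outgoing edge; boundary segments are oriented parallel
   to their edge. *)
Definition ribbon_Lk (P : 'I_3 -> pt) (F : folding_info) : R :=
  2^-1 * \sum_(i < 3)
    (let din := vsub (P i) (P (prv i)) in
     let dout := vsub (P (nxt i)) (P i) in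
     if F i then
       crossing_sign dout din (* boundary of outgoing layer over incoming edge *)
       + crossing_sign dout din (* outgoing edge over boundary of incoming layer *)
     else
       crossing_sign din dout (* incoming edge over boundary of outgoing layer *)
       + crossing_sign din dout (* boundary of incoming layer over outgoing edge *)).

End Ribbon.

From mathcomp Require Import all_boot all_order all_algebra ring lra.
Import Order.TTheory GRing.Theory Num.Theory.
Set Implicit Arguments. Unset Strict Implicit. Unset Printing Implicit Defensive.
Local Open Scope ring_scope.

(* The fold line at a vertex is perpendicular to the angle bisector there, so it
   lies on the external bisector.  The external bisectors at the two ends of a
   side meet at the excenter of that side, whose distance to both side lines is
   the exradius |D| / (l' + l'' - l), D being twice the signed area and l the
   length of the side.  Hence the fold lines are pairwise disjoint exactly when
   w is at most twice each of the three exradii.  The three excesses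
   x = l' + l'' - l sum to the perimeter L, and Heron's formula reads
   (2|D|)^2 = L x y z; together with w x, w y, w z <= 2|D| this forces
   3 w^2 <= L^2, i.e. Rib = L / w >= sqrt 3, with equality for an equilateral
   triangle of width sqrt 3 times its side.  The linking number is sg D times
   (number of folds with the incoming layer on top minus the others), so the
   bound holds for every folding and Lk = +-1 once exactly one fold is turned
   over. *)

Section PlaneVectors.
Variable R : rcfType.
Implicit Types u v p q x y z : pt R.

Lemma dot_ge0 u : 0 <= dot u u.
Proof. by rewrite /dot addr_ge0 // -expr2 sqr_ge0. Qed.

Lemma vnorm_sqr u : vnorm u ^+ 2 = dot u u.
Proof. by rewrite sqr_sqrtr // dot_ge0. Qed.

Lemma vnorm_subC x y : vnorm (vsub x y) = vnorm (vsub y x).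
Proof. by rewrite /vnorm /dot /vsub /=; congr Num.sqrt; ring. Qed.

Lemma crossC u v : cross u v = - cross v u.
Proof. by rewrite /cross; ring. Qed.

Lemma lagrange_identity u v : cross u v ^+ 2 + dot u v ^+ 2 = dot u u * dot v v.
Proof. by rewrite /cross /dot; ring. Qed.

Lemma vnorm_gt0 u v : cross u v != 0 -> 0 < vnorm u.
Proof.
move=> uv_neq0; rewrite sqrtr_gt0 lt_neqAle dot_ge0 andbT eq_sym.
apply: contra uv_neq0 => /eqP uu0; rewrite -sqrf_eq0 eq_le sqr_ge0 andbT.
have := lagrange_identity u v; rewrite uu0 mul0r => <-.
by rewrite lerDl sqr_ge0.
Qed.

Lemma dot_lt_vnorm_mul u v : cross u v != 0 -> dot u v < vnorm u * vnorm v.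
Proof.
move=> uv_neq0.
have cross_sq_gt0 : 0 < cross u v ^+ 2 by rewrite exprn_even_gt0.
have norm_sq : (vnorm u * vnorm v) ^+ 2 = dot u v ^+ 2 + cross u v ^+ 2.
  by rewrite exprMn !vnorm_sqr -lagrange_identity addrC.
have norm_ge0 : 0 <= vnorm u * vnorm v by rewrite mulr_ge0 ?sqrtr_ge0.
nra.
Qed.

Lemma dot_vsubl x y z v : dot (vsub x y) v = dot (vsub x z) v - dot (vsub y z) v.
Proof. by rewrite /dot /vsub /=; ring. Qed.

Lemma dotZl c u v : dot (vscale c u) v = c * dot u v.
Proof. by rewrite /dot /vscale /=; ring. Qed.

Lemma orthogonal_independent_eq0 u p q :
  cross p q != 0 -> dot u p = 0 -> dot u q = 0 -> u = (0, 0).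
Proof.
move=> pq_neq0 up0 uq0.
have u1E : u.1 * cross p q = dot u p * q.2 - dot u q * p.2 by rewrite /dot /cross; ring.
have u2E : u.2 * cross p q = dot u q * p.1 - dot u p * q.1 by rewrite /dot /cross; ring.
rewrite up0 uq0 !mul0r subrr in u1E u2E.
move/eqP: u1E; rewrite mulf_eq0 (negbTE pq_neq0) orbF => /eqP u1_0.
move/eqP: u2E; rewrite mulf_eq0 (negbTE pq_neq0) orbF => /eqP u2_0.
by case: u up0 uq0 u1_0 u2_0 => /= ? ? _ _ -> ->.
Qed.

Lemma dot_rhombus_diagonals u v : vnorm u != 0 -> vnorm v != 0 ->
  dot (vsub (vscale (vnorm v) u) (vscale (vnorm u) v))
      (vadd (vscale (vnorm u)^-1 u) (vscale (vnorm v)^-1 v)) = 0.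
Proof.
move=> u_neq0 v_neq0.
rewrite (_ : dot _ _ = vnorm v / vnorm u * dot u u - vnorm u / vnorm v * dot v v).
  by rewrite -!vnorm_sqr; field; rewrite v_neq0 u_neq0.
move: u_neq0 v_neq0; rewrite /dot /vsub /vadd /vscale /=.
by move: (vnorm u) (vnorm v) => nu nv nu_neq0 nv_neq0; field; rewrite nu_neq0 nv_neq0.
Qed.

End PlaneVectors.

Definition angle_bisector {R : rcfType} (v p n : pt R) : pt R :=
  vadd (vscale (vnorm (vsub p v))^-1 (vsub p v)) (vscale (vnorm (vsub n v))^-1 (vsub n v)).

(* The centre of the excircle tangent to side AB. *)
Definition excenter {R : rcfType} (A B C : pt R) : pt R :=
  let a := vnorm (vsub C B) in let b := vnorm (vsub A C) in let c := vnorm (vsub B A) in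
  vscale (a + b - c)^-1 (vadd (vadd (vscale a A) (vscale b B)) (vscale (- c) C)).

Section Triangle.
Variables (R : rcfType) (A B C : pt R).
Local Notation a := (vnorm (vsub C B)).
Local Notation b := (vnorm (vsub A C)).
Local Notation c := (vnorm (vsub B A)).
Local Notation D := (cross (vsub B A) (vsub C A)).
Local Notation E := (excenter A B C).
Hypothesis D_neq0 : D != 0.

Lemma side_lengths_gt0 : [/\ 0 < a, 0 < b & 0 < c].
Proof.
have crossCA : cross (vsub C B) (vsub A C) = D by rewrite /cross /vsub /=; ring.
have crossAB : cross (vsub A C) (vsub B A) = D by rewrite /cross /vsub /=; ring.
split; last exact: vnorm_gt0 D_neq0.
- by apply: (vnorm_gt0 (v := vsub A C)); rewrite crossCA.
- by apply: (vnorm_gt0 (v := vsub B A)); rewrite crossAB.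
Qed.

Lemma triangle_ineq_lt : c < a + b.
Proof.
have [a_gt0 b_gt0 c_gt0] := side_lengths_gt0.
have dot_lt : dot (vsub C B) (vsub A C) < a * b.
  by apply: dot_lt_vnorm_mul; rewrite (_ : cross _ _ = D) // /cross /vsub /=; ring.
have c_sq : c ^+ 2 = a ^+ 2 + b ^+ 2 + 2 * dot (vsub C B) (vsub A C).
  by rewrite !vnorm_sqr /dot /vsub /=; ring.
nra.
Qed.

Lemma excenter_on_external_bisectorA : dot (vsub E A) (angle_bisector A C B) = 0.
Proof.
have [_ b_gt0 c_gt0] := side_lengths_gt0.
have d_neq0 : a + vnorm (vsub C A) - c != 0.
  by rewrite -(vnorm_subC A C) gt_eqF // subr_gt0 triangle_ineq_lt.
have -> : vsub E A = vscale (- (a + vnorm (vsub C A) - c)^-1)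
    (vsub (vscale (vnorm (vsub B A)) (vsub C A)) (vscale (vnorm (vsub C A)) (vsub B A))).
  rewrite /excenter (vnorm_subC A C); move: d_neq0.
  set a' := vnorm (vsub C B); set b' := vnorm (vsub C A); set c' := vnorm (vsub B A).
  by move=> d_neq0; rewrite /vsub /vscale /vadd /=; congr (_, _); field.
by rewrite dotZl dot_rhombus_diagonals ?mulr0 // gt_eqF // -(vnorm_subC A C).
Qed.

Lemma excenter_on_external_bisectorB : dot (vsub E B) (angle_bisector B A C) = 0.
Proof.
have [a_gt0 _ c_gt0] := side_lengths_gt0.
have d_neq0 : a + b - vnorm (vsub A B) != 0.
  by rewrite -(vnorm_subC B A) gt_eqF // subr_gt0 triangle_ineq_lt.
have -> : vsub E B = vscale (a + b - vnorm (vsub A B))^-1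
    (vsub (vscale (vnorm (vsub C B)) (vsub A B)) (vscale (vnorm (vsub A B)) (vsub C B))).
  rewrite /excenter (vnorm_subC B A); move: d_neq0.
  set a' := vnorm (vsub C B); set b' := vnorm (vsub A C); set c' := vnorm (vsub A B).
  by move=> d_neq0; rewrite /vsub /vscale /vadd /=; congr (_, _); field.
by rewrite dotZl dot_rhombus_diagonals ?mulr0 // gt_eqF // -(vnorm_subC B A).
Qed.

Lemma dist_excenter_AB : dist_line A B E = `|D| / (a + b - c).
Proof.
have [_ _ c_gt0] := side_lengths_gt0.
have d_gt0 : 0 < a + b - c by rewrite subr_gt0 triangle_ineq_lt.
rewrite /dist_line (_ : cross _ _ = - (c / (a + b - c)) * D).
  rewrite normrM normrN [`|c / _|]ger0_norm ?divr_ge0 ?ltW //.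
  by field; rewrite !gt_eqF.
rewrite /excenter; move: c_gt0 d_gt0.
set a' := vnorm (vsub C B); set b' := vnorm (vsub A C); set c' := vnorm (vsub B A).
by move=> c_gt0 d_gt0; rewrite /cross /vsub /vscale /vadd /=; field; rewrite gt_eqF.
Qed.

Lemma dist_excenter_BC : dist_line B C E = `|D| / (a + b - c).
Proof.
have [a_gt0 _ _] := side_lengths_gt0.
have d_gt0 : 0 < a + b - c by rewrite subr_gt0 triangle_ineq_lt.
rewrite /dist_line (_ : cross _ _ = a / (a + b - c) * D).
  rewrite normrM [`|a / _|]ger0_norm ?divr_ge0 ?ltW //.
  by field; rewrite !gt_eqF.
rewrite /excenter; move: a_gt0 d_gt0.
set a' := vnorm (vsub C B); set b' := vnorm (vsub A C); set c' := vnorm (vsub B A).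
by move=> a_gt0 d_gt0; rewrite /cross /vsub /vscale /vadd /=; field; rewrite gt_eqF.
Qed.

Lemma external_bisectors_cross_neq0 :
  cross (angle_bisector A C B) (angle_bisector B A C) != 0.
Proof.
have [a_gt0 b_gt0 c_gt0] := side_lengths_gt0.
rewrite /angle_bisector -(vnorm_subC A C) -(vnorm_subC B A).
rewrite (_ : cross _ _ = D * (a + b + c) / (a * b * c)).
  have sum_gt0 : 0 < a + b + c by rewrite !addr_gt0.
  by rewrite !mulf_neq0 // ?invr_eq0 gt_eqF // !mulr_gt0.
move: a_gt0 b_gt0 c_gt0.
set a' := vnorm (vsub C B); set b' := vnorm (vsub A C); set c' := vnorm (vsub B A).
by move=> a_gt0 b_gt0 c_gt0; rewrite /cross /vsub /vscale /vadd /=; field; rewrite !gt_eqF.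
Qed.

Lemma external_bisectors_meet_at_excenter x :
  dot (vsub x A) (angle_bisector A C B) = 0 -> dot (vsub x B) (angle_bisector B A C) = 0 ->
  x = E.
Proof.
move=> xA xB.
have := orthogonal_independent_eq0 (u := vsub x E) external_bisectors_cross_neq0.
rewrite (dot_vsubl x E A) (dot_vsubl x E B) xA xB.
rewrite excenter_on_external_bisectorA excenter_on_external_bisectorB subrr.
move=> /(_ erefl erefl) [/subr0_eq x1E /subr0_eq x2E].
by rewrite [x]surjective_pairing [E]surjective_pairing x1E x2E.
Qed.

End Triangle.

Section PerimeterBound.
Variable R : realFieldType.
Implicit Types x y z m w s : R.

Lemma three_sqr_le_sqr_sum_of_max x y z m w :
  0 < x -> 0 < y -> 0 < z -> x <= m -> y <= m -> z <= m ->
  (w * m) ^+ 2 <= (x + y + z) * (x * y * z) -> 3 * w ^+ 2 <= (x + y + z) ^+ 2.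
Proof.
move=> x_gt0 y_gt0 z_gt0 xm ym zm wm.
have m_gt0 : 0 < m by apply: lt_le_trans xm.
have yz_le : y * z <= m ^+ 2 by rewrite expr2 ler_pM // ltW.
have xz_le : x * z <= m ^+ 2 by rewrite expr2 ler_pM // ltW.
have xy_le : x * y <= m ^+ 2 by rewrite expr2 ler_pM // ltW.
have prod_le : 3 * (x * y * z) <= (x + y + z) * m ^+ 2 by nra.
rewrite -(ler_pM2r (exprn_gt0 2 m_gt0)); nra.
Qed.

Lemma three_sqr_le_sqr_sum x y z w s :
  0 < x -> 0 < y -> 0 < z -> 0 <= w -> w * x <= s -> w * y <= s -> w * z <= s ->
  s ^+ 2 = (x + y + z) * (x * y * z) -> 3 * w ^+ 2 <= (x + y + z) ^+ 2.
Proof.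
move=> x_gt0 y_gt0 z_gt0 w_ge0 wx wy wz s_sq.
pose m := Num.max x (Num.max y z).
have xm : x <= m by rewrite le_max lexx.
have ym : y <= m by rewrite !le_max lexx orbT.
have zm : z <= m by rewrite !le_max lexx !orbT.
have wm : w * m <= s by rewrite /m !maxr_pMr // !ge_max wx wy wz.
have wm_ge0 : 0 <= w * m by rewrite mulr_ge0 // (le_trans (ltW x_gt0)).
apply: (three_sqr_le_sqr_sum_of_max x_gt0 y_gt0 z_gt0 xm ym zm).
by rewrite -s_sq; nra.
Qed.

End PerimeterBound.

Lemma nxtK : cancel nxt prv. Proof. exact: ordSK. Qed.
Lemma prvK : cancel prv nxt. Proof. exact: ord_predK. Qed.

Lemma nxt_nxt (k : 'I_3) : nxt (nxt k) = prv k.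
Proof. by apply/val_inj; case: k => -[|[|[|]]]. Qed.

Lemma prv_prv (k : 'I_3) : prv (prv k) = nxt k.
Proof. by apply/val_inj; case: k => -[|[|[|]]]. Qed.

Lemma nxt_neq (k : 'I_3) : nxt k != k.
Proof. by case: k => -[|[|[|]]]. Qed.

Lemma I3_cases (k : 'I_3) : [\/ k = 0, k = nxt 0 | k = prv 0].
Proof.
by case: k => -[|[|[|//]]] ?; [apply: Or31 | apply: Or32 | apply: Or33]; apply/val_inj.
Qed.

Lemma neq_adjacent (i j : 'I_3) : i != j -> j = nxt i \/ i = nxt j.
Proof.
by case: (I3_cases i) => ->; case: (I3_cases j) => ->;
  rewrite ?nxt_nxt ?prvK ?eqxx //; auto.
Qed.

Lemma sum_I3 (V : nmodType) (f : 'I_3 -> V) : \sum_i f i = f 0 + f (nxt 0) + f (prv 0).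
Proof.
by rewrite !big_ord_recl big_ord0 addr0 addrA; congr (f _ + f _ + f _); apply/val_inj.
Qed.

Section FoldedRibbon.
Variable R : rcfType.
Implicit Types (P : 'I_3 -> pt R) (F : folding_info) (k : 'I_3) (w : R).

Definition edge_len P k : R := vnorm (vsub (P (nxt k)) (P k)).

Definition area2 P : R := cross (vsub (P (nxt 0)) (P 0)) (vsub (P (prv 0)) (P 0)).

Definition excess P k : R := edge_len P (nxt k) + edge_len P (prv k) - edge_len P k.

Definition exradius P k : R := `|area2 P| / excess P k.

Lemma area2_vertex P k : cross (vsub (P (nxt k)) (P k)) (vsub (P (prv k)) (P k)) = area2 P.
Proof.
rewrite /area2; case: (I3_cases k) => ->; rewrite ?nxt_nxt ?nxtK ?prvK ?prv_prv //;
  by rewrite /cross /vsub /=; ring.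
Qed.

Lemma excess_vertex P k :
  vnorm (vsub (P (prv k)) (P (nxt k))) + vnorm (vsub (P k) (P (prv k)))
    - vnorm (vsub (P (nxt k)) (P k)) = excess P k.
Proof. by rewrite /excess /edge_len nxt_nxt prvK. Qed.

Lemma bisector_nxt P k : bisector P (nxt k) = angle_bisector (P (nxt k)) (P k) (P (prv k)).
Proof. by rewrite /bisector nxtK nxt_nxt. Qed.

Lemma excess_gt0 P k : nondegenerate_triangle P -> 0 < excess P k.
Proof.
move=> nd; rewrite -excess_vertex subr_gt0.
by apply: triangle_ineq_lt; rewrite area2_vertex.
Qed.

Lemma adjacent_fold_lines_meet P w k x : nondegenerate_triangle P ->
  fold_line P w k x /\ fold_line P w (nxt k) x <->
  x = excenter (P k) (P (nxt k)) (P (prv k)) /\ exradius P k < w / 2.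
Proof.
move=> nd.
have D_neq0 : cross (vsub (P (nxt k)) (P k)) (vsub (P (prv k)) (P k)) != 0.
  by rewrite area2_vertex.
have distAB := dist_excenter_AB D_neq0; have distBC := dist_excenter_BC D_neq0.
rewrite area2_vertex excess_vertex -/(exradius P k) in distAB distBC.
rewrite /fold_line bisector_nxt nxt_nxt.
split=> [[[xA xAB] [xB _]] | [-> r_lt]].
  have xE := external_bisectors_meet_at_excenter D_neq0 xA xB.
  by split=> //; rewrite -distAB -xE.
split; split; rewrite ?distAB ?distBC //.
  exact: excenter_on_external_bisectorA.
exact: excenter_on_external_bisectorB.
Qed.

Lemma fold_lines_disjointP P w : nondegenerate_triangle P ->
  fold_lines_disjoint P w <-> forall k, w <= 2 * exradius P k.
Proof.
move=> nd; split=> [disj k | w_le i j x].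
  rewrite leNgt; apply/negP => r_lt.
  have [] := (adjacent_fold_lines_meet w k (excenter (P k) (P (nxt k)) (P (prv k))) nd).2.
    by split=> //; lra.
  by apply: disj; rewrite eq_sym nxt_neq.
wlog -> : i j / j = nxt i => [adj ij fi fj | _ fi fj].
  by case: (neq_adjacent ij) => eq_ij; [apply: (adj i j) | apply: (adj j i)];
    rewrite // eq_sym.
have [_ r_lt] := (adjacent_fold_lines_meet w i x nd).1 (conj fi fj).
by have := w_le i; lra.
Qed.

Lemma len_edges P : len P = edge_len P 0 + edge_len P (nxt 0) + edge_len P (prv 0).
Proof. exact: sum_I3. Qed.

Lemma len_sum_excess P : len P = excess P 0 + excess P (nxt 0) + excess P (prv 0).
Proof. by rewrite len_edges /excess nxt_nxt prv_prv nxtK prvK; ring. Qed.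

Lemma heron P :
  4 * area2 P ^+ 2 = len P * (excess P 0 * excess P (nxt 0) * excess P (prv 0)).
Proof.
rewrite len_edges /excess nxt_nxt prv_prv nxtK prvK.
rewrite [RHS](_ : _ = 2 * (edge_len P 0 ^+ 2 * edge_len P (nxt 0) ^+ 2
    + edge_len P (nxt 0) ^+ 2 * edge_len P (prv 0) ^+ 2
    + edge_len P (prv 0) ^+ 2 * edge_len P 0 ^+ 2)
    - ((edge_len P 0 ^+ 2) ^+ 2 + (edge_len P (nxt 0) ^+ 2) ^+ 2
    + (edge_len P (prv 0) ^+ 2) ^+ 2)); last by ring.
rewrite /edge_len !vnorm_sqr nxt_nxt prvK.
rewrite /area2 /dot /cross /vsub /=; ring.
Qed.

Lemma sqrt3_mul_le_len P w : nondegenerate_triangle P -> 0 <= w ->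
  (forall k, w <= 2 * exradius P k) -> Num.sqrt 3 * w <= len P.
Proof.
move=> nd w_ge0 w_le.
have x_gt0 := excess_gt0 _ nd.
have wx k : w * excess P k <= 2 * `|area2 P|.
  by rewrite -ler_pdivlMr // -mulrA w_le.
have s_sq : (2 * `|area2 P|) ^+ 2
    = len P * (excess P 0 * excess P (nxt 0) * excess P (prv 0)).
  by rewrite -heron exprMn real_normK ?num_real //; ring.
have len_ge0 : 0 <= len P by apply: sumr_ge0 => i _; apply: sqrtr_ge0.
rewrite len_sum_excess in s_sq len_ge0 *.
have := three_sqr_le_sqr_sum (x_gt0 0) (x_gt0 _) (x_gt0 _) w_ge0 (wx 0) (wx _) (wx _) s_sq.
by rewrite -ler_sqr ?nnegrE ?mulr_ge0 ?sqrtr_ge0 // exprMn sqr_sqrtr ?ler0n.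
Qed.

Lemma ribbon_LkE P F :
  ribbon_Lk P F = Num.sg (area2 P) * \sum_k (if F k then -1 else 1).
Proof.
rewrite /ribbon_Lk mulr_sumr mulr_sumr; apply: eq_bigr => k _ /=.
have turn : cross (vsub (P k) (P (prv k))) (vsub (P (nxt k)) (P k)) = area2 P.
  by rewrite -(area2_vertex P k) /cross /vsub /=; ring.
rewrite /crossing_sign crossC turn sgrN.
by case: (F k); field.
Qed.

Section Equilateral.
Variable P : 'I_3 -> pt R.
Hypothesis equilateral : equilateral_triangle P.

Lemma equilateral_edge_len k : edge_len P k = edge_len P 0.
Proof. exact: equilateral. Qed.

Lemma equilateral_excess k : excess P k = edge_len P 0.
Proof. by rewrite /excess !equilateral_edge_len addrK. Qed.

Lemma equilateral_len : len P = 3 * edge_len P 0.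
Proof. by rewrite len_edges !equilateral_edge_len; ring. Qed.

Lemma equilateral_exradius k : nondegenerate_triangle P ->
  2 * exradius P k = Num.sqrt 3 * edge_len P 0.
Proof.
move=> nd; have l_gt0 : 0 < edge_len P 0 by rewrite -(equilateral_excess k) excess_gt0.
have area_sq : (2 * area2 P) ^+ 2 = 3 * (edge_len P 0 ^+ 2) ^+ 2.
  transitivity (4 * area2 P ^+ 2); first by ring.
  by rewrite heron equilateral_len !equilateral_excess; ring.
have two_area : 2 * `|area2 P| = Num.sqrt 3 * edge_len P 0 ^+ 2.
  rewrite -(normr_nat R 2) -normrM -sqrtr_sqr area_sq sqrtrM ?ler0n // sqrtr_sqr.
  by rewrite ger0_norm // exprn_ge0 // ltW.
rewrite /exradius equilateral_excess mulrA two_area.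
by field; rewrite gt_eqF.
Qed.

End Equilateral.

End FoldedRibbon.

Theorem corollary5p7 (R : rcfType) :
  (forall (P : 'I_3 -> pt R) (w : R) (F : folding_info),
     folded_ribbon_3stick P w ->
     (ribbon_Lk P F = 1 \/ ribbon_Lk P F = -1) ->
     Num.sqrt 3 <= rib P w)
  /\
  (forall P : 'I_3 -> pt R, nondegenerate_triangle P -> equilateral_triangle P ->
     exists (w : R) (F : folding_info),
       [/\ folded_ribbon_3stick P w,
           ribbon_Lk P F = 1 \/ ribbon_Lk P F = -1
         & rib P w = Num.sqrt 3]).
Proof.
have sqrt3_gt0 : 0 < Num.sqrt (3 : R) by rewrite sqrtr_gt0 ltr0n.
split=> [P w F [nd w_gt0 disj] _ | P nd eql].
  rewrite /rib ler_pdivlMr //.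
  exact: sqrt3_mul_le_len nd (ltW w_gt0) ((fold_lines_disjointP _ nd).1 disj).
have l_gt0 : 0 < edge_len P 0 by rewrite -(equilateral_excess eql 0) excess_gt0.
exists (Num.sqrt 3 * edge_len P 0), (fun k => k == 0); split.
- split; rewrite ?mulr_gt0 //.
  by apply/fold_lines_disjointP => // k; rewrite (equilateral_exradius eql k nd).
- rewrite ribbon_LkE sum_I3 /= (_ : -1 + 1 + 1 = 1); last by ring.
  rewrite mulr1; move: nd; rewrite /nondegenerate_triangle -/(area2 P) neq_lt.
  by case/orP => [/ltr0_sg | /gtr0_sg] ->; [right | left].
- rewrite /rib (equilateral_len eql) -{1}(sqr_sqrtr (ler0n R 3)).
  by field; rewrite !gt_eqF.
Qed.
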